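(* Let $n\ge 2$ and $\underline a\in I^n$ with $\Omega(\underline a)=\{i_1,\dots,i_s\}$, $i_1<\dots<i_s$. Then for any $k,l\in\Omega(\underline a)$, $$D_{kl}(x^{\underline a}x_kx_l)\in\mathrm{span}_{\mathbb F}\{D_{i_ji_{j+1}}(x^{\underline a}x_{i_j}x_{i_{j+1}})\mid 1\le j\le s-1\}.$$
   Context: $\mathbb F$ is a field of characteristic $p>2$, $I=\{0,\dots,p-1\}$. $\mathcal A(n)$ is the truncated polynomial algebra with basis $x^{\underline a}=x_1^{a_1}\cdots x_n^{a_n}$, $\underline a\in I^n$, and $x^{\underline a}x^{\underline b}=x^{\underline a+\underline b}$ ($=0$ if $\underline a+\underline b\notin I^n$); $\partial_i$ are the derivations with $\partial_i(x_j)=\delta_{ij}$, and $D_{ij}(f)=\partial_j(f)\partial_i-\partial_i(f)\partial_j\in W(n)=\mathrm{Der}\,\mathcal A(n)$. For $\underline a\in I^n$, $\Omega(\underline a)=\{i\mid a_i\neq p-1\}$. *)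

From HB Require Import structures.
From mathcomp Require Import all_boot all_order all_algebra.
Set Implicit Arguments. Unset Strict Implicit. Unset Printing Implicit Defensive.
Import GRing.Theory.
Local Open Scope ring_scope.

Notation expo n p := {ffun 'I_n -> 'I_p}.

(* The truncated polynomial algebra A(n): F-linear combinations of the
   monomials x^a, a in I^n (coefficient functions). *)
Notation Alg F n p := {ffun expo n p -> F^o}.

(* x^e for a nat-valued exponent e: the basis monomial x^e if e in I^n,
   and 0 otherwise (truncation). *)
Definition xmon (F : fieldType) (n p : nat) (e : 'I_n -> nat) : Alg F n p :=
  [ffun b : expo n p => ([forall i, (b i : nat) == e i])%:R].

Definition xpow (F : fieldType) (n p : nat) (a : expo n p) : Alg F n p :=
  xmon F p (fun i => (a i : nat)).

Definition xvar (F : fieldType) (n p : nat) (k : 'I_n) : Alg F n p :=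
  xmon F p (fun i => nat_of_bool (i == k)).

Definition amul (F : fieldType) (n p : nat) (f g : Alg F n p) : Alg F n p :=
  \sum_(a : expo n p) \sum_(b : expo n p)
     (f a * g b) *: xmon F p (fun i => (a i : nat) + b i).

Definition pd (F : fieldType) (n p : nat) (i : 'I_n) (f : Alg F n p) : Alg F n p :=
  \sum_(a : expo n p)
     (f a * (a i : nat)%:R) *: xmon F p (fun j => if j == i then (a j : nat).-1 else a j).

(* W(n) = Der A(n), a free A(n)-module with basis d_1,...,d_n:
   a derivation sum_j f_j d_j is represented by its coefficient vector (f_j)_j. *)
Notation Wn F n p := {ffun 'I_n -> Alg F n p}.

Definition Dop (F : fieldType) (n p : nat) (k l : 'I_n) (f : Alg F n p) : Wn F n p :=
  [ffun j => ((j == k)%:R *: pd l f) - ((j == l)%:R *: pd k f)].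

Definition Omega (n p : nat) (a : expo n p) : {set 'I_n} :=
  [set i | (a i : nat) != p.-1].

Definition omseq (n p : nat) (a : expo n p) : seq 'I_n :=
  [seq i <- enum 'I_n | i \in Omega a].

Definition ompairs (n p : nat) (a : expo n p) : seq ('I_n * 'I_n) :=
  zip (omseq a) (behead (omseq a)).

(* With alpha_i = a_i + 1, which is nonzero in F for i in Omega(a) because then
   a_i + 1 < p, put G_i = alpha_i^-1 x^(a + e_i) d_i.  A direct computation gives
   D_kl(x^a x_k x_l) = alpha_k alpha_l (G_k - G_l) for k, l in Omega(a).  By
   telescoping along i_1 < ... < i_s, every difference G_k - G_l is a combination
   of the consecutive differences G_(i_j) - G_(i_(j+1)), and each of these is a
   nonzero multiple of D_(i_j i_(j+1))(x^a x_(i_j) x_(i_(j+1))). *)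

From HB Require Import structures.
From mathcomp Require Import all_boot all_order all_algebra.
From mathcomp Require Import zify.
Import GRing.Theory.
Local Open Scope ring_scope.
Set Implicit Arguments. Unset Strict Implicit.

Section Span.
Variables (R : pzRingType) (V : lmodType R).

Definition spanned (T : eqType) (w : T -> V) (r : seq T) (v : V) :=
  exists c : T -> R, v = \sum_(q <- r) c q *: w q.

Variables (T : eqType) (w : T -> V).

Lemma spanned0 r : spanned w r 0.
Proof. by exists (fun _ => 0); rewrite big1 // => q _; rewrite scale0r. Qed.

Lemma spannedB r u v : spanned w r u -> spanned w r v -> spanned w r (u - v).
Proof.
move=> [c ->] [d ->]; exists (fun q => c q - d q).
by rewrite -sumrB; apply: eq_bigr => q _; rewrite scalerBl.
Qed.

Lemma spannedZ r t v : spanned w r v -> spanned w r (t *: v).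
Proof.
move=> [c ->]; exists (fun q => t * c q).
by rewrite scaler_sumr; apply: eq_bigr => q _; rewrite scalerA.
Qed.

Lemma spanned_cons q0 r v : q0 \notin r -> spanned w r v -> spanned w (q0 :: r) v.
Proof.
move=> q0r [c ->]; exists (fun q => if q == q0 then 0 else c q).
rewrite big_cons eqxx scale0r add0r; apply: eq_big_seq.
by move=> q qr; case: eqP => // qq0; rewrite -qq0 qr in q0r.
Qed.

Lemma spanned_head q0 r : q0 \notin r -> spanned w (q0 :: r) (w q0).
Proof.
move=> q0r; exists (fun q => (q == q0)%:R).
rewrite big_cons eqxx scale1r big_seq big1 ?addr0 // => q qr.
by case: eqP => [qq0|]; [rewrite -qq0 qr in q0r | rewrite scale0r].
Qed.

Lemma spanned_rescale (w' : T -> V) (c : T -> R) r v :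
  {in r, forall q, w q = c q *: w' q} -> spanned w r v -> spanned w' r v.
Proof.
move=> ww' [d ->]; exists (fun q => d q * c q).
by apply: eq_big_seq => q qr; rewrite ww' // scalerA.
Qed.

End Span.

Lemma mem_zip (S T : eqType) (s : seq S) (t : seq T) x y :
  (x, y) \in zip s t -> x \in s /\ y \in t.
Proof.
elim: s t => [|x0 s IHs] [|y0 t] //=.
rewrite in_cons => /orP [/eqP [-> ->]|/IHs [xs yt]]; first by split; exact: mem_head.
by rewrite !in_cons xs yt !orbT.
Qed.

Lemma spanned_telescope (R : pzRingType) (V : lmodType R) (T : eqType) (g : T -> V)
    (s : seq T) x y :
  uniq s -> x \in s -> y \in s ->
  spanned (fun q => g q.1 - g q.2) (zip s (behead s)) (g x - g y).
Proof.
elim: s x y => [|h [|t0 t] IHs] //= x y.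
  by rewrite !inE => _ /eqP -> /eqP ->; rewrite subrr; apply: spanned0.
move=> /andP [ht ut] xs ys.
have h_t0_new : (h, t0) \notin zip (t0 :: t) t.
  by apply/negP => /mem_zip [ht0 _]; rewrite ht0 in ht.
have sub_t0 z : z \in h :: t0 :: t ->
    spanned (fun q => g q.1 - g q.2) ((h, t0) :: zip (t0 :: t) t) (g z - g t0).
  rewrite in_cons => /orP [/eqP ->|zt]; first exact: spanned_head.
  by apply: spanned_cons => //; apply: IHs; rewrite ?mem_head.
have -> : g x - g y = (g x - g t0) - (g y - g t0) by rewrite opprB addrA subrK.
by apply: spannedB; apply: sub_t0.
Qed.

Section Monomials.
Variables (F : fieldType) (n p : nat).
Implicit Types e : 'I_n -> nat.

Definition expo_nat (a : expo n p) : 'I_n -> nat := fun i => a i.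

Definition inc_at e i : 'I_n -> nat := fun m => (e m + (m == i))%N.

Lemma inc_at_ne e i m : m != i -> inc_at e i m = e m.
Proof. by rewrite /inc_at => /negbTE ->; rewrite addn0. Qed.

Lemma inc_atC e i j : inc_at (inc_at e i) j =1 inc_at (inc_at e j) i.
Proof. by move=> m; rewrite /inc_at addnAC. Qed.

Lemma eq_xmon e e' : e =1 e' -> xmon F p e = xmon F p e'.
Proof.
by move=> ee'; apply/ffunP => b; rewrite !ffunE (eq_forallb (fun i => congr1 _ (ee' i))).
Qed.

Lemma xmon_out e i : (p <= e i)%N -> xmon F p e = 0.
Proof.
move=> pe; apply/ffunP => b; rewrite !ffunE.
by case: forallP => // /(_ i) /eqP bi; have := ltn_ord (b i); rewrite bi; lia.
Qed.

Definition expo_of e (He : forall i, (e i < p)%N) : expo n p :=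
  [ffun i => Ordinal (He i)].

Lemma xmonE e (He : forall i, (e i < p)%N) b : xmon F p e b = (b == expo_of He)%:R.
Proof.
rewrite ffunE; congr (nat_of_bool _)%:R; apply/forallP/eqP => [be|-> i].
  by apply/ffunP => i; apply/val_inj; rewrite ffunE; apply/eqP/be.
by rewrite ffunE.
Qed.

Lemma sum_scale_xmon (V : lmodType F) e (He : forall i, (e i < p)%N) (G : expo n p -> V) :
  \sum_b xmon F p e b *: G b = G (expo_of He).
Proof.
rewrite (bigD1 (expo_of He)) //= xmonE eqxx scale1r big1 ?addr0 // => b /negbTE nb.
by rewrite xmonE nb scale0r.
Qed.

Lemma amul0l (g : Alg F n p) : amul 0 g = 0.
Proof.
by rewrite /amul big1 // => a _; rewrite big1 // => b _; rewrite ffunE mul0r scale0r.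
Qed.

Lemma amul0r (f : Alg F n p) : amul f 0 = 0.
Proof.
by rewrite /amul big1 // => a _; rewrite big1 // => b _; rewrite ffunE mulr0 scale0r.
Qed.

Lemma amul_xmon e e' :
  amul (xmon F p e) (xmon F p e') = xmon F p (fun i => e i + e' i)%N.
Proof.
have [He|/forallPn [i]] := boolP [forall i, e i < p]%N; last first.
  rewrite -leqNgt => pe; rewrite (xmon_out pe) amul0l (@xmon_out _ i) //; lia.
have [He'|/forallPn [i]] := boolP [forall i, e' i < p]%N; last first.
  rewrite -leqNgt => pe'; rewrite (xmon_out pe') amul0r (@xmon_out _ i) //; lia.
rewrite /amul; under eq_bigr do (under eq_bigr do rewrite -scalerA; rewrite -scaler_sumr).
rewrite (sum_scale_xmon (elimT forallP He)) (sum_scale_xmon (elimT forallP He')).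
by apply: eq_xmon => i; rewrite !ffunE.
Qed.

Lemma pd_xmon_inc e i : (forall m, inc_at e i m < p)%N ->
  pd i (xmon F p (inc_at e i)) = (e i + 1)%:R *: xmon F p e.
Proof.
move=> He; rewrite /pd; under eq_bigr do rewrite -scalerA.
rewrite (sum_scale_xmon He); congr (_ *: _); first by rewrite ffunE /= /inc_at eqxx.
apply: eq_xmon => m; rewrite ffunE /= /inc_at.
by case: eqP => [->|]; rewrite ?addn1 ?addn0.
Qed.

End Monomials.

Section Derivations.
Variables (F : fieldType) (n p : nat).

Definition mulpd (f : Alg F n p) (i : 'I_n) : Wn F n p := [ffun j => (j == i)%:R *: f].

Lemma mulpdZ c f i : mulpd (c *: f) i = c *: mulpd f i.
Proof. by apply/ffunP => j; rewrite !ffunE scalerA mulrC -scalerA. Qed.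

Lemma DopE k l (f : Alg F n p) : Dop k l f = mulpd (pd l f) k - mulpd (pd k f) l.
Proof. by apply/ffunP => j; rewrite !ffunE. Qed.

Lemma Dop_diag k (f : Alg F n p) : Dop k k f = 0.
Proof. by apply/ffunP => j; rewrite !ffunE subrr. Qed.

End Derivations.

Section Exponent.
Variables (F : fieldType) (n p : nat) (a : expo n p).
Hypothesis pcharF : p \in [pchar F].

Definition alpha i : F := (a i + 1)%:R.

Definition Gder i : Wn F n p :=
  (alpha i)^-1 *: mulpd (xmon F p (inc_at (expo_nat a) i)) i.

Lemma Omega_inc_lt i : i \in Omega a -> (a i + 1 < p)%N.
Proof. by rewrite inE => ai; have := ltn_ord (a i); lia. Qed.

Lemma alpha_neq0 i : i \in Omega a -> alpha i != 0.
Proof.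
move=> /Omega_inc_lt ai; rewrite /alpha -(dvdn_pcharf pcharF).
by apply/negP => /dvdn_leq; lia.
Qed.

Lemma Dop_xpow_xvar k l : k \in Omega a -> l \in Omega a -> k != l ->
  Dop k l (amul (amul (xpow F a) (xvar F p k)) (xvar F p l)) =
  alpha l *: mulpd (xmon F p (inc_at (expo_nat a) k)) k -
  alpha k *: mulpd (xmon F p (inc_at (expo_nat a) l)) l.
Proof.
move=> /Omega_inc_lt ak /Omega_inc_lt al kl.
have lt_p m : (inc_at (inc_at (expo_nat a) k) l m < p)%N.
  rewrite /inc_at /expo_nat; have := ltn_ord (a m).
  by case: eqP => [mk|_]; case: eqP => [ml|_]; subst => //=; [rewrite eqxx in kl | lia..].
have -> : amul (amul (xpow F a) (xvar F p k)) (xvar F p l) =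
          xmon F p (inc_at (inc_at (expo_nat a) k) l) by rewrite !amul_xmon.
rewrite DopE pd_xmon_inc // (eq_xmon F p (inc_atC _ k l)).
rewrite pd_xmon_inc; last by move=> m; rewrite -inc_atC.
by rewrite !mulpdZ !inc_at_ne // eq_sym.
Qed.

Lemma Dop_Gder k l : k \in Omega a -> l \in Omega a ->
  Dop k l (amul (amul (xpow F a) (xvar F p k)) (xvar F p l)) =
  (alpha k * alpha l) *: (Gder k - Gder l).
Proof.
move=> ka la; have [<-|kl] := eqVneq k l; first by rewrite Dop_diag subrr scaler0.
rewrite Dop_xpow_xvar // scalerBr !scalerA.
congr (_ *: _ - _ *: _); first by rewrite mulrAC mulfV ?mul1r ?alpha_neq0.
by rewrite mulfK ?alpha_neq0.
Qed.

End Exponent.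

Unset Implicit Arguments.

Theorem lemma4p2 (F : fieldType) (p n : nat)
  (hp : prime p) (hp2 : (2 < p)%N) (hchar : p \in [pchar F])
  (hn : (2 <= n)%N) (a : expo n p) (k l : 'I_n)
  (hk : k \in Omega a) (hl : l \in Omega a) :
  exists c : 'I_n * 'I_n -> F,
    Dop k l (amul (amul (xpow F a) (xvar F p k)) (xvar F p l)) =
    \sum_(q <- ompairs a)
       c q *: Dop q.1 q.2 (amul (amul (xpow F a) (xvar F p q.1)) (xvar F p q.2)).
Proof.
have mem_omseq i : (i \in omseq a) = (i \in Omega a) by rewrite mem_filter mem_enum andbT.
have uniq_omseq : uniq (omseq a) by rewrite filter_uniq ?enum_uniq.
have telescope := spanned_telescope (Gder F a) uniq_omseq
  (etrans (mem_omseq k) hk) (etrans (mem_omseq l) hl).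
rewrite (Dop_Gder hchar hk hl); apply: spannedZ.
pose c q := (alpha F a q.1 * alpha F a q.2)^-1.
apply: (spanned_rescale (c := c)) telescope => -[i j] /mem_zip [+ /mem_behead] /=.
rewrite !mem_omseq => io jo.
by rewrite (Dop_Gder hchar io jo) scalerA mulVf ?scale1r // mulf_neq0 ?alpha_neq0.
Qed.
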